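(* Let $\kappa\in\mathbb C$ with $\Re\kappa>0,\Im\kappa>0$, and let $R^\kappa_{12},R^\kappa_{21}$ be the entries of $\mathcal R_\kappa$ (context). There exists $c_1>0$ such that for all $\bm\varphi\in\bm H^{-1/2}$ and $\bm g\in\bm H^{1/2}$: $$-\Re\langle R^\kappa_{12}\bm\varphi,\overline{\bm\varphi}\rangle\ge c_1\|\bm\varphi\|^2_{\bm H^{-1/2}},\quad -\Re\langle R^\kappa_{21}\bm g,\overline{\bm g}\rangle\ge c_1\|\bm g\|^2_{\bm H^{1/2}},$$ $$-\Im\langle R^\kappa_{12}\bm\varphi,\overline{\bm\varphi}\rangle\ge c_1\|\bm\varphi\|^2_{\bm H^{-3/2}},\quad \Im\langle R^\kappa_{21}\bm g,\overline{\bm g}\rangle\ge c_1\|\bm g\|^2_{\bm H^{-1/2}}.$$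
   Context: For $s\in\mathbb R$, $H^s$ is the space of $2\pi$-periodic distributions $\varphi=\sum_{n\in\mathbb Z}\hat\varphi(n)e^{int}$ with $\|\varphi\|_s^2:=|\hat\varphi(0)|^2+\sum_{n\ne0}|n|^{2s}|\hat\varphi(n)|^2<\infty$; $\bm H^s=H^s\times H^s$. $\langle\bm g,\bm\varphi\rangle=\int_0^{2\pi}\bm g\cdot\bm\varphi\,dt$ (bilinear, extended by duality), overline = conjugation. Multipliers: $\mathrm H$ has symbol $1$ for $n\ge0$, $-1$ for $n<0$; $\Lambda_\kappa$ has symbol $(n^2-\kappa^2)^{-1/2}$ (principal branch), $\Lambda_\kappa^{-1}$ its inverse; $\bm\Lambda_\kappa=\mathrm{diag}(\Lambda_\kappa,\Lambda_\kappa)$, $\bm\Lambda_\kappa^{-1}=\mathrm{diag}(\Lambda_\kappa^{-1},\Lambda_\kappa^{-1})$, $\bm H(g_1,g_2)=(-\mathrm Hg_2,\mathrm Hg_1)$, $\bm I$ identity. Two materials with Lamé parameters $\mu_\pm>0$, $\lambda_\pm>-\mu_\pm$; $\alpha_\pm:=\frac{i\mu_\pm}{2(\lambda_\pm+2\mu_\pm)}$, $\beta_\pm:=\frac{\lambda_\pm+3\mu_\pm}{4\mu_\pm(\lambda_\pm+2\mu_\pm)}$, $\delta_\pm:=-\frac{\mu_\pm(\lambda_\pm+\mu_\pm)}{\lambda_\pm+2\mu_\pm}$, $\rho:=-(\beta_++\beta_-)(\delta_++\delta_-)-(\alpha_++\alpha_-)^2$. $\mathcal C^\kappa_\pm:=\begin{bmatrix}\alpha_\pm\bm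 H&-\beta_\pm\bm\Lambda_\kappa\\\delta_\pm\bm\Lambda_\kappa^{-1}&-\alpha_\pm\bm H\end{bmatrix}$ and $\mathcal R_\kappa:=\rho^{-1}(\mathcal C^\kappa_++\mathcal C^\kappa_-)(\frac12\mathcal I+\mathcal C^\kappa_-)=\begin{bmatrix}R^\kappa_{11}&R^\kappa_{12}\\R^\kappa_{21}&R^\kappa_{22}\end{bmatrix}$; explicitly $R^\kappa_{12}=-\frac{\beta_++\beta_-}{\rho}\bm\Lambda_\kappa\big(\frac12\bm I+\frac{\alpha_+\beta_--\alpha_-\beta_+}{\beta_++\beta_-}\bm H\big)$ and $R^\kappa_{21}=\frac{\delta_++\delta_-}{\rho}\bm\Lambda_\kappa^{-1}\big(\frac12\bm I-\frac{\alpha_+\delta_--\alpha_-\delta_+}{\delta_++\delta_-}\bm H\big)$. *)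

From HB Require Import structures.
From mathcomp Require Import all_boot all_order all_algebra.
From mathcomp Require Import all_classical all_reals all_analysis.
From mathcomp Require Import complex.
Set Implicit Arguments. Unset Strict Implicit. Unset Printing Implicit Defensive.
Import Order.TTheory GRing.Theory Num.Theory numFieldNormedType.Exports.
Local Open Scope ring_scope.
Local Open Scope classical_set_scope.
Local Open Scope ring_scope.
Local Open Scope complex_scope.

Section Defs.
Variable R : realType.

(* Fourier coefficients of a 2-vector of 2pi-periodic distributions *)
Definition fcoef2 := ((int -> R[i]) * (int -> R[i]))%type.

Definition symsum (T : nmodType) (f : int -> T) (N : nat) : T :=
  \sum_(0 <= k < N.*2.+1) f (k%:Z - N%:Z).

(* Sobolev weight for H^s with s = s2/2 : 1 if n = 0, |n|^(2s) otherwise *)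
Definition sobw (s2 : int) (n : int) : R :=
  if n == 0 then 1 else ((`|n|%N)%:R : R) ^ s2.

Definition sqnorm (z : R[i]) : R := complex.Re z ^+ 2 + complex.Im z ^+ 2.

Definition normHs_part (s2 : int) (phi : fcoef2) (N : nat) : R :=
  symsum (fun n => sobw s2 n * (sqnorm (phi.1 n) + sqnorm (phi.2 n))) N.

Definition inHs (s2 : int) (phi : fcoef2) : Prop := cvg (normHs_part s2 phi @ \oo).

Definition normHs2 (s2 : int) (phi : fcoef2) : R := lim (normHs_part s2 phi @ \oo).

(* <g, conj phi> = int_0^{2pi} g . conj(phi) dt = 2 pi sum_n (g_1(n) conj(phi_1(n)) + g_2(n) conj(phi_2(n))),
   a complex limit taken componentwise *)
Definition pair_term (g phi : fcoef2) (n : int) : R[i] :=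
  g.1 n * (phi.1 n)^* + g.2 n * (phi.2 n)^*.
Definition pairing (g phi : fcoef2) : R[i] :=
  ((2 * pi)%:C) *
  (lim ((fun N => complex.Re (symsum (pair_term g phi) N)) @ \oo)
   +i* lim ((fun N => complex.Im (symsum (pair_term g phi) N)) @ \oo)).

Definition Hsym (n : int) : R[i] := if (0 <= n)%R then 1 else -1.
Definition Lsym (kappa : R[i]) (n : int) : R[i] :=
  (sqrtc ((n%:~R : R)%:C ^+ 2 - kappa ^+ 2))^-1.
Definition Linvsym (kappa : R[i]) (n : int) : R[i] :=
  sqrtc ((n%:~R : R)%:C ^+ 2 - kappa ^+ 2).

Definition mult2 (m : int -> R[i]) (phi : fcoef2) : fcoef2 :=
  (fun n => m n * phi.1 n, fun n => m n * phi.2 n).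
Definition addf2 (a b : fcoef2) : fcoef2 := (fun n => a.1 n + b.1 n, fun n => a.2 n + b.2 n).
Definition scal2 (c : R[i]) (a : fcoef2) : fcoef2 := (fun n => c * a.1 n, fun n => c * a.2 n).

Definition bI (phi : fcoef2) : fcoef2 := phi.
Definition bH (g : fcoef2) : fcoef2 := (fun n => - (Hsym n * g.2 n), fun n => Hsym n * g.1 n).
Definition bL (kappa : R[i]) := mult2 (Lsym kappa).
Definition bLinv (kappa : R[i]) := mult2 (Linvsym kappa).

Definition alphaL (la mu : R) : R[i] := 'i * (mu / (2 * (la + 2 * mu)))%:C.
Definition betaL (la mu : R) : R[i] := ((la + 3 * mu) / (4 * mu * (la + 2 * mu)))%:C.
Definition deltaL (la mu : R) : R[i] := (- (mu * (la + mu) / (la + 2 * mu)))%:C.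
Definition rhoL (lap mup lam mum : R) : R[i] :=
  - (betaL lap mup + betaL lam mum) * (deltaL lap mup + deltaL lam mum)
  - (alphaL lap mup + alphaL lam mum) ^+ 2.

Definition R12 (kappa : R[i]) (lap mup lam mum : R) (phi : fcoef2) : fcoef2 :=
  let ap := alphaL lap mup in let am := alphaL lam mum in
  let bp := betaL lap mup in let bm := betaL lam mum in
  scal2 (- ((bp + bm) / rhoL lap mup lam mum))
    (bL kappa (addf2 (scal2 (1/2) (bI phi)) (scal2 ((ap * bm - am * bp) / (bp + bm)) (bH phi)))).

Definition R21 (kappa : R[i]) (lap mup lam mum : R) (g : fcoef2) : fcoef2 :=
  let ap := alphaL lap mup in let am := alphaL lam mum in
  let dp := deltaL lap mup in let dm := deltaL lam mum in
  scal2 ((dp + dm) / rhoL lap mup lam mum)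
    (bLinv kappa (addf2 (scal2 (1/2) (bI g)) (scal2 (- ((ap * dm - am * dp) / (dp + dm))) (bH g)))).

End Defs.

From HB Require Import structures.
From mathcomp Require Import all_boot all_order all_algebra.
From mathcomp Require Import all_classical all_reals all_analysis.
From mathcomp Require Import complex.
From mathcomp Require Import ring lra zify.
Set Implicit Arguments. Unset Strict Implicit. Unset Printing Implicit Defensive.
Import Order.TTheory GRing.Theory Num.Theory.
Local Open Scope ring_scope.
Local Open Scope complex_scope.

(* All operators involved are Fourier multipliers, so each pairing is a sum over the modes n of
   [-k q_t(n) m(n)]: here k > 0 is built from the Lame constants, q_t(n) is the n-th term of
   <(1/2 I + i t H) phi, conj phi> for a real t with |t| < 1/2, hence comparable to |phi(n)|^2,
   and m = Lsym kappa for R12, m = Linvsym kappa for R21. Writing (n^2 - kappa^2)^(1/2) = u + i v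
   with kappa = a + i b, one has u > 0 > v, u v = - a b and u ~ max(1, |n|), hence
   - v ~ 1 / max(1, |n|) and - v <= (a / b) u. These mode-wise bounds give the four estimates
   term by term, and the domination - v <= (a / b) u makes the series of imaginary parts
   converge. *)

Section SymmetricSeries.
Variable R : realType.
Implicit Types f g : int -> R.

Lemma symsumS (T : nmodType) (f : int -> T) N :
  symsum f N.+1 = f (- N.+1%:Z) + symsum f N + f N.+1%:Z.
Proof.
rewrite /symsum doubleS big_nat_recl // big_nat_recr //= -addrA sub0r.
congr (_ + (_ + f _)); last lia.
by apply: eq_bigr => k _; congr f; lia.
Qed.

Lemma symsumZ f c : symsum (fun n => c * f n) = (fun N => c * symsum f N).
Proof. by apply: funext => N; rewrite /symsum mulr_sumr. Qed.

Lemma symsum_ge0 f N : (forall n, 0 <= f n) -> 0 <= symsum f N.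
Proof. by move=> f_ge0; apply: sumr_ge0 => k _. Qed.

Lemma nondecreasing_symsum f : (forall n, 0 <= f n) -> nondecreasing_seq (symsum f).
Proof.
move=> f_ge0; apply/nondecreasing_seqP => N; rewrite symsumS.
by have := f_ge0 (- N.+1%:Z); have := f_ge0 N.+1%:Z; lra.
Qed.

Lemma is_cvgn_symsum_le f g :
  (forall n, 0 <= f n <= g n) -> cvgn (symsum g) -> cvgn (symsum f).
Proof.
move=> fg g_cvg.
have f_ge0 n : 0 <= f n by case/andP: (fg n).
have g_ge0 n : 0 <= g n by case/andP: (fg n) => /le_trans; apply.
apply: nondecreasing_is_cvgn; first exact: nondecreasing_symsum.
exists (limn (symsum g)) => _ [N _ <-].
have := nondecreasing_cvgn_le (nondecreasing_symsum g_ge0) g_cvg N.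
apply: le_trans; apply: ler_sum => k _.
by case/andP: (fg (k%:Z - N%:Z)).
Qed.

Lemma is_cvgn_symsumZ f c : cvgn (symsum f) -> cvgn (symsum (fun n => c * f n)).
Proof. by rewrite symsumZ; apply: is_cvgMl_tmp. Qed.

Lemma limn_symsumZ f c :
  cvgn (symsum f) -> limn (symsum (fun n => c * f n)) = c * limn (symsum f).
Proof. by rewrite symsumZ; apply: limZl_tmp. Qed.

Lemma limn_symsum_ge0 f : (forall n, 0 <= f n) -> cvgn (symsum f) -> 0 <= limn (symsum f).
Proof. by move=> f_ge0 f_cvg; apply: limr_ge => //; apply: nearW => N; apply: symsum_ge0. Qed.

Lemma ler_limn_symsum c f g : (forall n, c * f n <= g n) ->
  cvgn (symsum f) -> cvgn (symsum g) -> c * limn (symsum f) <= limn (symsum g).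
Proof.
move=> fg f_cvg g_cvg; rewrite -limn_symsumZ //.
apply: ler_lim => //; first exact: is_cvgn_symsumZ.
by apply: nearW => N; apply: ler_sum => k _.
Qed.

End SymmetricSeries.

Section Weights.
Variable R : realType.

Definition brack (n : int) : R := Num.max 1 (`|n|%N)%:R.

Lemma brack_ge1 n : 1 <= brack n.
Proof. by rewrite /brack le_max lexx. Qed.

Lemma brack_gt0 n : 0 < brack n.
Proof. exact: lt_le_trans ltr01 (brack_ge1 n). Qed.

Lemma sobwE s2 n : sobw R s2 n = brack n ^ s2.
Proof.
rewrite /sobw /brack; have [->|n_neq0] := eqVneq n 0; first by rewrite max_l ?ler01 // exp1rz.
by rewrite max_r // ler1n absz_gt0.
Qed.

Lemma sobw1 n : sobw R 1 n = brack n.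
Proof. by rewrite sobwE. Qed.

Lemma sobwN1 n : sobw R (-1) n = (brack n)^-1.
Proof. by rewrite sobwE -invr_expz. Qed.

Lemma sobwN3 n : sobw R (-3) n = (brack n ^+ 3)^-1.
Proof. by rewrite sobwE -invr_expz. Qed.

Lemma sobw_ge0 s2 n : 0 <= sobw R s2 n.
Proof. by rewrite sobwE exprz_ge0 // ltW ?brack_gt0. Qed.

Lemma sobw_le s2 s2' n : (s2 <= s2')%R -> sobw R s2 n <= sobw R s2' n.
Proof. by rewrite !sobwE; apply: ler_weXz2l; apply: brack_ge1. Qed.

End Weights.

Section HermForm.
Variable R : realType.
Implicit Types phi : fcoef2 R.

Definition sqnorm2 phi n : R := sqnorm (phi.1 n) + sqnorm (phi.2 n).

Definition hsign (n : int) : R := if (0 <= n)%R then 1 else -1.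

(* [herm_form t phi n] is the n-th term of <(1/2 I + i t H) phi, conj phi>. *)
Definition herm_form (t : R) phi n : R :=
  sqnorm2 phi n / 2 - 2 * t * hsign n *
    (complex.Im (phi.1 n) * complex.Re (phi.2 n) - complex.Re (phi.1 n) * complex.Im (phi.2 n)).

Lemma sqnorm2_ge0 phi n : 0 <= sqnorm2 phi n.
Proof. by rewrite /sqnorm2 /sqnorm; nra. Qed.

Lemma herm_form_bounds t phi n : `|t| < 1/2 ->
  (1/2 - `|t|) * sqnorm2 phi n <= herm_form t phi n <= sqnorm2 phi n.
Proof.
move=> t_lt; rewrite /herm_form /sqnorm2 /sqnorm.
case: (phi.1 n) => x1 y1; case: (phi.2 n) => x2 y2 /=.
set S := _ + _ + _; set J := y1 * x2 - x1 * y2.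
have S_ge0 : 0 <= S by rewrite /S; nra.
have J_le : `|2 * J| <= S.
  rewrite ler_norml /S /J; apply/andP; split.
  - by have := sqr_ge0 (y1 + x2); have := sqr_ge0 (x1 - y2); rewrite ?sqrrB ?sqrrD; lra.
  - by have := sqr_ge0 (y1 - x2); have := sqr_ge0 (x1 + y2); rewrite ?sqrrB ?sqrrD; lra.
have tJ_le : `|2 * t * hsign n * J| <= `|t| * S.
  have -> : 2 * t * hsign n * J = t * hsign n * (2 * J) by ring.
  have hsign_norm : `|hsign n| = 1 by rewrite /hsign; case: ifP => _; rewrite ?normrN normr1.
  by rewrite normrM (normrM t) hsign_norm mulr1; apply: ler_wpM2l.
move: tJ_le; rewrite ler_norml => /andP[tJ_ge tJ_le].
have t_ge0 : 0 <= `|t| by [].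
apply/andP; split; nra.
Qed.

End HermForm.

Section Root.
Variable R : realType.

Lemma sqrtc_sub_sqr (a b x : R) : 0 < a -> 0 < b ->
  let s := sqrtc (x%:C - (a +i* b) ^+ 2) in
  [/\ 0 < complex.Re s, complex.Re s * complex.Im s = - (a * b)
    & complex.Re s ^+ 2 - complex.Im s ^+ 2 = x - (a ^+ 2 - b ^+ 2)].
Proof.
move=> a_gt0 b_gt0 s.
have ab_gt0 : 0 < a * b + b * a by rewrite addr_gt0 ?mulr_gt0.
have sE : x%:C - (a +i* b) ^+ 2 = (x - (a ^+ 2 - b ^+ 2)) +i* (- (a * b + b * a)).
  by rewrite !expr2; simpc.
have s_sqr := sqr_sqrtc (x%:C - (a +i* b) ^+ 2).
have [Re_ge0 Im_le0] : 0 <= complex.Re s /\ complex.Im s <= 0.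
  by rewrite /s sE /sqrtc /= oppr_eq0 gt_eqF // ltr0_sg ?oppr_lt0.
move: s_sqr Re_ge0 Im_le0; rewrite -/s sE; case: s => u v /= [re_eq im_eq] u_ge0 v_le0.
have uv_eq : u * v = - (a * b) by lra.
split=> //.
rewrite lt_neqAle u_ge0 andbT eq_sym; apply/eqP => u0.
by move: uv_eq; rewrite u0 mul0r => /eqP; rewrite eq_sym oppr_eq0 mulf_eq0 !gt_eqF.
Qed.

(* [u +i* v] is the principal square root of [N^2 - (a +i* b)^2]. *)
Lemma root_bounds (a b u v N : R) : 0 < a -> 0 < b -> 0 < u -> 0 <= N ->
  u * v = - (a * b) -> u ^+ 2 - v ^+ 2 = N ^+ 2 - (a ^+ 2 - b ^+ 2) ->
  [/\ v < 0, b <= u, - v <= a, u ^+ 2 <= N ^+ 2 + b ^+ 2 & b * N <= (a + b) * u].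
Proof.
move=> a_gt0 b_gt0 u_gt0 N_ge0 uv_eq sqr_eq.
have v_lt0 : v < 0 by rewrite -(pmulr_rlt0 _ u_gt0) uv_eq oppr_lt0 mulr_gt0.
have b_le_u : b <= u.
  rewrite leNgt; apply/negP => u_lt_b.
  have a_lt_v : a < - v by rewrite -(ltr_pM2l b_gt0); nra.
  have : a ^+ 2 < v ^+ 2 by nra.
  have : u ^+ 2 < b ^+ 2 by nra.
  have : 0 <= N ^+ 2 by nra.
  lra.
have v_le_a : - v <= a by nra.
split=> //; first nra.
have [N_le|N_gt] := lerP N (a + b).
  by have := ler_wpM2l (ltW b_gt0) N_le; nra.
have sqr_le : (b * N) ^+ 2 <= ((a + b) * u) ^+ 2.
  have : (a ^+ 2 + 2 * a * b) * (a + b) ^+ 2 <= (a ^+ 2 + 2 * a * b) * N ^+ 2.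
    by rewrite ler_wpM2l ?ler_sqr ?nnegrE; nra.
  have : (a + b) ^+ 2 * (N ^+ 2 - a ^+ 2) <= (a + b) ^+ 2 * u ^+ 2 by apply: ler_wpM2l; nra.
  rewrite !exprMn; nra.
by rewrite -ler_sqr ?nnegrE; nra.
Qed.

Lemma root_max_bounds (a b u v N : R) : 0 < a -> 0 < b -> 0 < u -> 0 <= N ->
  u * v = - (a * b) -> u ^+ 2 - v ^+ 2 = N ^+ 2 - (a ^+ 2 - b ^+ 2) ->
  let M := Num.max 1 N in
  [/\ b * M <= (1 + a + b) * u, u <= (1 + b) * M, a * b <= (1 + b) * M * - v,
      u ^+ 2 + v ^+ 2 <= (1 + a ^+ 2 + b ^+ 2) * M ^+ 2 & - v <= a / b * u].
Proof.
move=> a_gt0 b_gt0 u_gt0 N_ge0 uv_eq sqr_eq M.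
have [v_lt0 b_le_u v_le_a u_sqr_le bN_le] := root_bounds a_gt0 b_gt0 u_gt0 N_ge0 uv_eq sqr_eq.
have M_ge1 : 1 <= M by rewrite le_max lexx.
have N_le_M : N <= M by rewrite le_max lexx orbT.
have N_sqr_le : N ^+ 2 <= M ^+ 2 by rewrite ler_sqr ?nnegrE; lra.
have M_sqr_ge1 : 1 <= M ^+ 2 by rewrite -(expr1n _ 2) ler_sqr ?nnegrE; lra.
have u_le : u <= (1 + b) * M.
  rewrite -ler_sqr ?nnegrE ?mulr_ge0; try lra.
  rewrite exprMn; nra.
split=> //.
- have [->|->] : M = 1 \/ M = N.
    by rewrite /M; case: (leP 1 N) => [/max_r|/ltW /max_l]; [right|left].
  + nra.
  + nra.
- have -> : a * b = u * - v by rewrite mulrN uv_eq opprK.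
  by apply: ler_wpM2r; lra.
- nra.
- by rewrite mulrAC ler_pdivlMr //; nra.
Qed.

End Root.

Section Symbols.
Variable R : realType.

Definition sectorial_symbol (z : int -> R[i]) (r i : int) (sg : R) : Prop :=
  [/\ exists2 c, 0 < c & forall n, c * sobw R r n <= complex.Re (z n),
      exists C, forall n, complex.Re (z n) <= C * sobw R r n,
      exists2 c, 0 < c & forall n, c * sobw R i n <= sg * complex.Im (z n)
    & exists K, forall n, sg * complex.Im (z n) <= K * complex.Re (z n)].

Lemma Linvsym_bounds (a b : R) n : 0 < a -> 0 < b ->
  exists u v : R, [/\ Linvsym (a +i* b) n = u +i* v, 0 < u &
  let M := brack R n in
  [/\ b * M <= (1 + a + b) * u, u <= (1 + b) * M, a * b <= (1 + b) * M * - v,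
      u ^+ 2 + v ^+ 2 <= (1 + a ^+ 2 + b ^+ 2) * M ^+ 2 & - v <= a / b * u]].
Proof.
move=> a_gt0 b_gt0; set N : R := (`|n|%N)%:R.
have nE : ((n%:~R : R)%:C) ^+ 2 = (N ^+ 2)%:C.
  by rewrite -rmorphXn /N natr_absz intr_norm real_normK ?num_real.
have [u_gt0 uv_eq sqr_eq] := sqrtc_sub_sqr (N ^+ 2) a_gt0 b_gt0.
rewrite /Linvsym nE; case: (sqrtc _) u_gt0 uv_eq sqr_eq => u v /= *.
by exists u, v; split=> //; apply: root_max_bounds.
Qed.

Lemma Linvsym_sectorial (a b : R) : 0 < a -> 0 < b ->
  sectorial_symbol (Linvsym (a +i* b)) 1 (-1) (-1).
Proof.
move=> a_gt0 b_gt0; split.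
- exists (b / (1 + a + b)) => [|n]; first by rewrite divr_gt0 //; lra.
  have [u [v [-> _ [bM_le _ _ _ _]]]] := Linvsym_bounds n a_gt0 b_gt0.
  by rewrite sobw1 mulrAC ler_pdivrMr /=; lra.
- exists (1 + b) => n; have [u [v [-> _ [_ u_le _ _ _]]]] := Linvsym_bounds n a_gt0 b_gt0.
  by rewrite sobw1.
- exists (a * b / (1 + b)) => [|n]; first by rewrite divr_gt0 ?mulr_gt0 //; lra.
  have [u [v [-> _ [_ _ ab_le _ _]]]] := Linvsym_bounds n a_gt0 b_gt0.
  have M_gt0 := brack_gt0 R n.
  by rewrite sobwN1 -[X in X <= _]mulrA -invfM ler_pdivrMr ?mulr_gt0 //=; lra.
- exists (a / b) => n; have [u [v [-> _ [_ _ _ _ v_le]]]] := Linvsym_bounds n a_gt0 b_gt0.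
  by rewrite mulN1r.
Qed.

Lemma Lsym_sectorial (a b : R) : 0 < a -> 0 < b ->
  sectorial_symbol (Lsym (a +i* b)) (-1) (-3) 1.
Proof.
move=> a_gt0 b_gt0.
have ler_pdivs (x y p q : R) : 0 < p -> 0 < q -> x * q <= y * p -> x / p <= y / q.
  by move=> p_gt0 q_gt0 le; rewrite ler_pdivrMr // mulrAC ler_pdivlMr.
have D_gt0 (u v : R) : 0 < u -> 0 < u ^+ 2 + v ^+ 2.
  by move=> u_gt0; have := exprn_gt0 2 u_gt0; have := sqr_ge0 v; lra.
have ab2_gt0 : 0 < 1 + a ^+ 2 + b ^+ 2 by nra.
have LsymE n : Lsym (a +i* b) n = (Linvsym (a +i* b) n)^-1 by [].
split.
- exists (b / ((1 + a + b) * (1 + a ^+ 2 + b ^+ 2))) => [|n].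
    by rewrite divr_gt0 ?mulr_gt0 //; lra.
  have [u [v [uvE u_gt0 [bM_le _ _ D_le _]]]] := Linvsym_bounds n a_gt0 b_gt0.
  have M_gt0 := brack_gt0 R n.
  rewrite sobwN1 LsymE uvE /= -[X in X <= _]mulrA -invfM.
  apply: ler_pdivs; [by rewrite !mulr_gt0 //; lra | exact: D_gt0 |].
  have := ler_wpM2l (ltW b_gt0) D_le.
  have := ler_wpM2l (ltW (mulr_gt0 ab2_gt0 M_gt0)) bM_le.
  by rewrite expr2; nra.
- exists ((1 + a + b) / b) => n.
  have [u [v [uvE u_gt0 [bM_le _ _ _ _]]]] := Linvsym_bounds n a_gt0 b_gt0.
  have M_gt0 := brack_gt0 R n.
  rewrite sobwN1 LsymE uvE /= -[X in _ <= X]mulrA -invfM.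
  apply: ler_pdivs; [exact: D_gt0 | exact: mulr_gt0 |].
  have := ler_wpM2l (ltW u_gt0) bM_le; have := sqr_ge0 v.
  by rewrite expr2; nra.
- exists (a * b / ((1 + b) * (1 + a ^+ 2 + b ^+ 2))) => [|n].
    by rewrite divr_gt0 ?mulr_gt0 //; lra.
  have [u [v [uvE u_gt0 [_ _ ab_le D_le _]]]] := Linvsym_bounds n a_gt0 b_gt0.
  have M_gt0 := brack_gt0 R n.
  rewrite sobwN3 LsymE uvE /= mul1r -mulNr -[X in X <= _]mulrA -invfM.
  apply: ler_pdivs; [by rewrite !mulr_gt0 ?exprn_gt0 //; lra | exact: D_gt0 |].
  have := ler_pM (mulr_ge0 (ltW a_gt0) (ltW b_gt0)) (ltW (D_gt0 u v u_gt0)) ab_le D_le.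
  by rewrite !exprS expr0; nra.
- exists (a / b) => n.
  have [u [v [uvE u_gt0 [_ _ _ _ v_le]]]] := Linvsym_bounds n a_gt0 b_gt0.
  by rewrite LsymE uvE /= mul1r -mulNr mulrA ler_pM2r // invr_gt0 D_gt0.
Qed.

End Symbols.

Section Pairing.
Variable R : realType.

Lemma coercive_series (Wr Wi S f g : int -> R) (c C K : R) :
  (forall n, 0 <= S n) -> (forall n, 0 <= Wi n <= Wr n) -> 0 <= c ->
  (forall n, c * (Wr n * S n) <= f n <= C * (Wr n * S n)) ->
  (forall n, c * (Wi n * S n) <= g n <= K * f n) ->
  cvgn (symsum (fun n => Wr n * S n)) ->
  [/\ cvgn (symsum (fun n => Wi n * S n)), cvgn (symsum f), cvgn (symsum g),
      c * limn (symsum (fun n => Wr n * S n)) <= limn (symsum f)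
    & c * limn (symsum (fun n => Wi n * S n)) <= limn (symsum g)].
Proof.
move=> S_ge0 W_le c_ge0 f_bd g_bd Wr_cvg.
have Wi_ge0 n : 0 <= Wi n by case/andP: (W_le n).
have Wr_ge0 n : 0 <= Wr n by case/andP: (W_le n) => /le_trans; apply.
have f_ge0 n : 0 <= f n.
  by case/andP: (f_bd n) => + _; apply: le_trans; rewrite !mulr_ge0.
have g_ge0 n : 0 <= g n.
  by case/andP: (g_bd n) => + _; apply: le_trans; rewrite !mulr_ge0.
have f_cvg : cvgn (symsum f).
  apply: (is_cvgn_symsum_le (g := fun n => C * (Wr n * S n))); last exact: is_cvgn_symsumZ.
  by move=> n; rewrite f_ge0; case/andP: (f_bd n).
have g_cvg : cvgn (symsum g).
  apply: (is_cvgn_symsum_le (g := fun n => K * f n)); last exact: is_cvgn_symsumZ.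
  by move=> n; rewrite g_ge0; case/andP: (g_bd n).
have Wi_cvg : cvgn (symsum (fun n => Wi n * S n)).
  apply: is_cvgn_symsum_le Wr_cvg => n.
  by rewrite mulr_ge0 //= ler_wpM2r //; case/andP: (W_le n).
split=> //; apply: ler_limn_symsum => // n.
- by case/andP: (f_bd n).
- by case/andP: (g_bd n).
Qed.

Lemma Re_pairing (g phi : fcoef2 R) :
  complex.Re (pairing g phi) = 2 * pi * limn (symsum (fun n => complex.Re (pair_term g phi n))).
Proof.
rewrite /pairing /= mul0r subr0.
suff -> : (fun N => complex.Re (symsum (pair_term g phi) N))
          = symsum (fun n => complex.Re (pair_term g phi n)) by [].
apply: funext => N; rewrite /symsum.
by apply: (big_morph (@complex.Re R)) => // -[? ?] [? ?].
Qed.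

Lemma Im_pairing (g phi : fcoef2 R) :
  complex.Im (pairing g phi) = 2 * pi * limn (symsum (fun n => complex.Im (pair_term g phi n))).
Proof.
rewrite /pairing /= mul0r addr0.
suff -> : (fun N => complex.Im (symsum (pair_term g phi) N))
          = symsum (fun n => complex.Im (pair_term g phi n)) by [].
apply: funext => N; rewrite /symsum.
by apply: (big_morph (@complex.Im R)) => // -[? ?] [? ?].
Qed.

Lemma pairing_multiplier (G phi : fcoef2 R) (a : int -> R) (z : int -> R[i]) (sg : R) :
  (forall n, pair_term G phi n = (- a n)%:C * z n) -> sg * sg = 1 ->
  cvgn (symsum (fun n => a n * complex.Re (z n))) ->
  cvgn (symsum (fun n => a n * (sg * complex.Im (z n)))) ->
  - complex.Re (pairing G phi) = 2 * pi * limn (symsum (fun n => a n * complex.Re (z n))) /\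
  - (sg * complex.Im (pairing G phi))
    = 2 * pi * limn (symsum (fun n => a n * (sg * complex.Im (z n)))).
Proof.
move=> ptE sg_sqr Re_cvg Im_cvg.
have Re_ptE : (fun n => complex.Re (pair_term G phi n)) = (fun n => -1 * (a n * complex.Re (z n))).
  by apply: funext => n; rewrite ptE; case: (z n) => x y /=; ring.
have Im_ptE : (fun n => complex.Im (pair_term G phi n))
              = (fun n => - sg * (a n * (sg * complex.Im (z n)))).
  apply: funext => n; rewrite ptE; case: (z n) => x y /=.
  by transitivity (- a n * ((sg * sg) * y)); [rewrite sg_sqr|]; ring.
rewrite Re_pairing Im_pairing Re_ptE Im_ptE !limn_symsumZ //; split; first by ring.
by transitivity (2 * pi * ((sg * sg) * limn (symsum (fun n => a n * (sg * complex.Im (z n))))));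
  [ring | rewrite sg_sqr mul1r].
Qed.

Lemma sectorial_pairing (z : int -> R[i]) (r i : int) (sg k t : R) :
  sectorial_symbol z r i sg -> (i <= r)%R -> sg * sg = 1 -> 0 < k -> `|t| < 1/2 ->
  exists2 c, 0 < c & forall (T : fcoef2 R -> fcoef2 R) c1, 0 <= c1 <= c ->
    (forall phi n, pair_term (T phi) phi n = (- k * herm_form t phi n)%:C * z n) ->
    forall phi, inHs r phi ->
      c1 * normHs2 r phi <= - complex.Re (pairing (T phi) phi) /\
      c1 * normHs2 i phi <= - (sg * complex.Im (pairing (T phi) phi)).
Proof.
case=> -[cr cr_gt0 Re_ge] [C Re_le] [ci ci_gt0 Im_ge] [K Im_le] i_le_r sg_sqr k_gt0 t_lt.
set e := 1/2 - `|t|; have e_gt0 : 0 < e by rewrite subr_gt0.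
set c := k * e * Num.min cr ci.
have c_gt0 : 0 < c by rewrite !mulr_gt0 // lt_min cr_gt0.
exists (2 * pi * c) => [|T c1 /andP[c1_ge0 c1_le] ptE phi phi_in].
  by rewrite mulr_gt0 // mulr_gt0 // pi_gt0.
set S := sqnorm2 phi; set Q := herm_form t phi.
have S_ge0 n : 0 <= S n := sqnorm2_ge0 phi n.
have [Q_ge Q_le] : (forall n, e * S n <= Q n) /\ (forall n, Q n <= S n).
  by split=> n; case/andP: (herm_form_bounds phi n t_lt).
have Q_ge0 n : 0 <= Q n by rewrite (le_trans _ (Q_ge n)) ?mulr_ge0 ?(ltW e_gt0).
have lower_bd n (x : R) (s : int) (c' : R) : Num.min cr ci <= c' ->
    c' * sobw R s n <= x -> c * (sobw R s n * S n) <= k * Q n * x.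
  move=> min_le cx; have W_ge0 := sobw_ge0 R s n.
  have c'_ge0 : 0 <= c' by rewrite (le_trans _ min_le) // le_min !ltW.
  have := ler_pM (mulr_ge0 (ltW e_gt0) (S_ge0 n)) (mulr_ge0 c'_ge0 W_ge0) (Q_ge n) cx.
  have := ler_wpM2r (mulr_ge0 (ltW e_gt0) (mulr_ge0 W_ge0 (S_ge0 n))) min_le.
  by rewrite /c; nra.
have W_bd n : 0 <= sobw R i n <= sobw R r n by rewrite sobw_ge0 sobw_le.
have f_bd n :
    c * (sobw R r n * S n) <= k * Q n * complex.Re (z n) <= k * C * (sobw R r n * S n).
  rewrite (lower_bd _ _ _ cr) ?(Re_ge n) ?ge_min ?lexx //=.
  have Re_ge0 : 0 <= complex.Re (z n) by rewrite (le_trans _ (Re_ge n)) ?mulr_ge0 ?sobw_ge0 ?ltW.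
  have := ler_wpM2l (ltW k_gt0) (ler_pM (Q_ge0 n) Re_ge0 (Q_le n) (Re_le n)).
  by rewrite mulrA; have -> : k * C * (sobw R r n * S n) = k * (S n * (C * sobw R r n)) by ring.
have g_bd n : c * (sobw R i n * S n) <= k * Q n * (sg * complex.Im (z n))
                <= K * (k * Q n * complex.Re (z n)).
  rewrite (lower_bd _ _ _ ci) ?(Im_ge n) ?ge_min ?lexx ?orbT //=.
  by rewrite [X in _ <= X]mulrCA ler_wpM2l ?mulr_ge0 ?(ltW k_gt0).
have [Wi_cvg f_cvg g_cvg f_lim_ge g_lim_ge] :=
  coercive_series S_ge0 W_bd (ltW c_gt0) f_bd g_bd phi_in.
have phi_ptE n : pair_term (T phi) phi n = (- (k * Q n))%:C * z n by rewrite ptE mulNr.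
have [-> ->] := pairing_multiplier phi_ptE sg_sqr f_cvg g_cvg.
have scale (N L : R) : 0 <= N -> c * N <= L -> c1 * N <= 2 * pi * L.
  move=> N_ge0 cN_le; apply: le_trans (_ : 2 * pi * c * N <= _); first by rewrite ler_wpM2r.
  by rewrite -mulrA ler_wpM2l ?mulr_ge0 ?pi_ge0.
by split; apply: scale => //; rewrite /normHs2 /normHs_part;
  apply: limn_symsum_ge0 => // n; apply: mulr_ge0 (sobw_ge0 _ _ _) (S_ge0 n).
Qed.

End Pairing.

Section Operators.
Variable R : realType.

Lemma pair_term_scal_mult (k t : R) (m : int -> R[i]) (phi : fcoef2 R) n :
  pair_term (scal2 k%:C (mult2 m (addf2 (scal2 (1/2) (bI phi)) (scal2 ('i * t%:C) (bH phi))))) phi n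
  = (k * herm_form t phi n)%:C * m n.
Proof.
have half : (1 / 2 : R[i]) = (1 / 2 : R)%:C by rewrite fmorph_div rmorph1 rmorph_nat.
have HsymE : Hsym R n = (hsign R n)%:C.
  by rewrite /Hsym /hsign; case: ifP => _; rewrite ?rmorph1 ?rmorphN1.
rewrite /pair_term /herm_form /sqnorm2 /sqnorm /= HsymE half.
case: (m n) (phi.1 n) (phi.2 n) => [m1 m2] [x1 y1] [x2 y2]; simpc.
by congr (_ +i* _); rewrite /=; ring.
Qed.

(* alphaL = i * lame_a, betaL = lame_b, deltaL = - lame_d and rhoL = lame_rho. *)
Definition lame_a (la mu : R) : R := mu / (2 * (la + 2 * mu)).
Definition lame_b (la mu : R) : R := (la + 3 * mu) / (4 * mu * (la + 2 * mu)).
Definition lame_d (la mu : R) : R := mu * (la + mu) / (la + 2 * mu).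
Definition lame_rho (lap mup lam mum : R) : R :=
  (lame_b lap mup + lame_b lam mum) * (lame_d lap mup + lame_d lam mum)
  + (lame_a lap mup + lame_a lam mum) ^+ 2.

Lemma rhoLE lap mup lam mum : rhoL lap mup lam mum = (lame_rho lap mup lam mum)%:C.
Proof.
rewrite /rhoL /alphaL /betaL /deltaL /lame_rho /lame_a /lame_b /lame_d !expr2.
by simpc; congr (_ +i* _); ring.
Qed.

Lemma lame_bounds la mu : 0 < mu -> - mu < la ->
  [/\ 0 < lame_a la mu, lame_a la mu < 1/2, 0 < lame_b la mu & 0 < lame_d la mu].
Proof.
move=> mu_gt0 la_gt; rewrite /lame_a /lame_b /lame_d.
have la2mu_gt0 : 0 < la + 2 * mu by lra.
split; rewrite ?divr_gt0 ?mulr_gt0 //; try lra.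
by rewrite ltr_pdivrMr ?mulr_gt0 //; lra.
Qed.

Lemma lame_rho_gt0 lap mup lam mum : 0 < mup -> 0 < mum -> - mup < lap -> - mum < lam ->
  0 < lame_rho lap mup lam mum.
Proof.
move=> mup_gt0 mum_gt0 lap_gt lam_gt.
have [_ _ bp dp] := lame_bounds mup_gt0 lap_gt; have [_ _ bm dm] := lame_bounds mum_gt0 lam_gt.
by rewrite /lame_rho ltr_pwDl ?sqr_ge0 // mulr_gt0 ?addr_gt0.
Qed.

Lemma abs_weighted_diff_lt (x y p q : R) : 0 < x < 1/2 -> 0 < y < 1/2 -> 0 < p -> 0 < q ->
  `|(x * q - y * p) / (p + q)| < 1/2.
Proof.
move=> /andP[x_gt0 x_lt] /andP[y_gt0 y_lt] p_gt0 q_gt0.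
rewrite normrM normfV (gtr0_norm (addr_gt0 p_gt0 q_gt0)) ltr_pdivrMr ?addr_gt0 // ltr_norml.
by apply/andP; split; nra.
Qed.

Lemma weighted_diff_imagE (ap am bp bm : R) :
  ('i * ap%:C * bm%:C - 'i * am%:C * bp%:C) / (bp%:C + bm%:C)
  = 'i * ((ap * bm - am * bp) / (bp + bm))%:C.
Proof. by rewrite -!mulrA -mulrBr -!rmorphM -rmorphB -rmorphD -mulrA -fmorph_div. Qed.

Lemma pair_term_R12 (kappa : R[i]) (lap mup lam mum : R) :
  0 < mup -> 0 < mum -> - mup < lap -> - mum < lam ->
  exists2 k, 0 < k & exists2 t, `|t| < 1/2 & forall phi n,
    pair_term (R12 kappa lap mup lam mum phi) phi n = (- k * herm_form t phi n)%:C * Lsym kappa n.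
Proof.
move=> mup_gt0 mum_gt0 lap_gt lam_gt.
have [ap_gt0 ap_lt bp_gt0 _] := lame_bounds mup_gt0 lap_gt.
have [am_gt0 am_lt bm_gt0 _] := lame_bounds mum_gt0 lam_gt.
have rho_gt0 := lame_rho_gt0 mup_gt0 mum_gt0 lap_gt lam_gt.
exists ((lame_b lap mup + lame_b lam mum) / lame_rho lap mup lam mum).
  exact: divr_gt0 (addr_gt0 bp_gt0 bm_gt0) rho_gt0.
exists ((lame_a lap mup * lame_b lam mum - lame_a lam mum * lame_b lap mup)
        / (lame_b lap mup + lame_b lam mum)).
  by apply: abs_weighted_diff_lt; rewrite ?ap_gt0 ?am_gt0.
move=> phi n; rewrite -pair_term_scal_mult /R12 /bL rhoLE /alphaL /betaL weighted_diff_imagE.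
by rewrite -rmorphD -fmorph_div -rmorphN.
Qed.

Lemma pair_term_R21 (kappa : R[i]) (lap mup lam mum : R) :
  0 < mup -> 0 < mum -> - mup < lap -> - mum < lam ->
  exists2 k, 0 < k & exists2 t, `|t| < 1/2 & forall g n,
    pair_term (R21 kappa lap mup lam mum g) g n = (- k * herm_form t g n)%:C * Linvsym kappa n.
Proof.
move=> mup_gt0 mum_gt0 lap_gt lam_gt.
have [ap_gt0 ap_lt _ dp_gt0] := lame_bounds mup_gt0 lap_gt.
have [am_gt0 am_lt _ dm_gt0] := lame_bounds mum_gt0 lam_gt.
have rho_gt0 := lame_rho_gt0 mup_gt0 mum_gt0 lap_gt lam_gt.
set dp := lame_d lap mup; set dm := lame_d lam mum.
set ap := lame_a lap mup; set am := lame_a lam mum.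
exists ((dp + dm) / lame_rho lap mup lam mum).
  exact: divr_gt0 (addr_gt0 dp_gt0 dm_gt0) rho_gt0.
exists (- ((ap * dm - am * dp) / (dp + dm))).
  by rewrite normrN; apply: abs_weighted_diff_lt; rewrite ?ap_gt0 ?am_gt0.
have deltaLE la mu : deltaL la mu = (- lame_d la mu)%:C by [].
have t_eq : (ap * - dm - am * - dp) / (- dp + - dm) = (ap * dm - am * dp) / (dp + dm).
  by rewrite -opprD invrN mulrN -mulNr; congr (_ / _); ring.
have iN (x : R) : - ('i * x%:C) = 'i * (- x)%:C by rewrite rmorphN mulrN.
move=> g n; rewrite -pair_term_scal_mult /R21 /bLinv rhoLE /alphaL !deltaLE.
rewrite weighted_diff_imagE t_eq iN.
by rewrite -rmorphD -fmorph_div -opprD mulNr.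
Qed.

End Operators.

Theorem mainTheorem11 (R : realType) (kappa : R[i]) (lap mup lam mum : R) :
  0 < complex.Re kappa -> 0 < complex.Im kappa ->
  0 < mup -> 0 < mum -> - mup < lap -> - mum < lam ->
  exists c1 : R, 0 < c1 /\
    (forall phi : fcoef2 R, inHs (-1) phi ->
       c1 * normHs2 (-1) phi <= - complex.Re (pairing (R12 kappa lap mup lam mum phi) phi) /\
       c1 * normHs2 (-3) phi <= - complex.Im (pairing (R12 kappa lap mup lam mum phi) phi)) /\
    (forall g : fcoef2 R, inHs 1 g ->
       c1 * normHs2 1 g <= - complex.Re (pairing (R21 kappa lap mup lam mum g) g) /\
       c1 * normHs2 (-1) g <= complex.Im (pairing (R21 kappa lap mup lam mum g) g)).
Proof.
case: kappa => a b /= a_gt0 b_gt0 mup_gt0 mum_gt0 lap_gt lam_gt.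
have [k12 k12_gt0 [t12 t12_lt R12E]] := pair_term_R12 (a +i* b) mup_gt0 mum_gt0 lap_gt lam_gt.
have [k21 k21_gt0 [t21 t21_lt R21E]] := pair_term_R21 (a +i* b) mup_gt0 mum_gt0 lap_gt lam_gt.
have sgN1 : (-1 : R) * -1 = 1 by rewrite mulrNN mulr1.
have [c12 c12_gt0 R12_coercive] :=
  sectorial_pairing (Lsym_sectorial a_gt0 b_gt0) isT (mulr1 1) k12_gt0 t12_lt.
have [c21 c21_gt0 R21_coercive] :=
  sectorial_pairing (Linvsym_sectorial a_gt0 b_gt0) isT sgN1 k21_gt0 t21_lt.
set c1 := Num.min c12 c21.
have c1_ge0 : 0 <= c1 by rewrite le_min !ltW.
exists c1; split; first by rewrite lt_min c12_gt0.
split=> phi phi_in.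
- have := R12_coercive _ c1 _ R12E phi phi_in.
  by rewrite mul1r; apply; rewrite c1_ge0 ge_min lexx.
- have := R21_coercive _ c1 _ R21E phi phi_in.
  by rewrite mulN1r opprK; apply; rewrite c1_ge0 ge_min lexx orbT.
Qed.
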